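(* Let $\mathcal{V}$ be a finite-dimensional inner product space with inner product $\langle\cdot,\cdot\rangle$ and distance $d(x,y)=\sqrt{\langle x-y,x-y\rangle}$, let $\mathcal{S}\subseteq\mathcal{V}$ be the state space and $U:\mathcal{S}\to\mathcal{S}$ a map such that $\mathcal{S}$ is bounded (there is $D$ with $d(s,t)<D$ for all $s,t\in\mathcal{S}$) and $\langle U(s),U(t)\rangle=\langle s,t\rangle$ for all $s,t\in\mathcal{S}$. Then the system is uniformly recurrent in metric: for every $\epsilon>0$ there is an integer $n>0$ such that $d(U(n)s,s)<\epsilon$ for all $s\in\mathcal{S}$.
   Context: $U(n)$ denotes the $n$-fold composition of $U$. *)

From HB Require Import structures.
From mathcomp Require Import all_boot all_order all_algebra.
From mathcomp Require Import complex reals.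
Set Implicit Arguments. Unset Strict Implicit. Unset Printing Implicit Defensive.
Import Order.TTheory GRing.Theory Num.Theory.
Local Open Scope ring_scope.

(* The finite-dimensional (complex) inner product space V = C^k, with
   vectors represented as row vectors 'rV[R[i]]_k, R a real field. *)

Definition inner (R : realType) (k : nat) (x y : 'rV[R[i]]_k) : R[i] :=
  \sum_(j < k) x 0 j * (y 0 j)^*.

(* Distance d(x,y) = sqrt <x-y,x-y>; <x-y,x-y> is real and >= 0, so we take
   the real square root of its real part. *)
Definition dist (R : realType) (k : nat) (x y : 'rV[R[i]]_k) : R :=
  Num.sqrt (complex.Re (inner (x - y) (x - y))).

(* Cut the bounded set
   into finitely many cells of small diameter and follow, for each cell, the
   cell in which the orbit of a chosen representative lies at time n.  These
   finitely many cell-to-cell maps cannot all be distinct, so two times p < q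
   give the same map.  For any state s with representative r of its cell,
   U^q s, U^q r, U^p r and U^p s are then pairwise close (the first and last
   pairs by isometry), hence so are U^(q-p) s and s, again by isometry. *)
From HB Require Import structures.
From mathcomp Require Import all_boot all_order all_algebra.
From mathcomp Require Import complex reals ring lra.
From Stdlib Require Import ClassicalEpsilon.
Set Implicit Arguments. Unset Strict Implicit. Unset Printing Implicit Defensive.
Import Order.TTheory GRing.Theory Num.Theory.
Local Open Scope ring_scope.

Lemma pigeonhole_nat (T : finType) (f : nat -> T) :
  exists p q, (p < q)%N /\ f p = f q.
Proof.
pose g (i : 'I_#|T|.+1) := f i.
have /injectivePn[i [j neq_ij eq_gij]] : ~~ injectiveb g.
  by apply/injectiveP => /leq_card; rewrite card_ord ltnn.
case: (ltngtP i j) => [lt_ij|lt_ji|/val_inj eq_ij]; first by exists i, j.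
- by exists j, i.
- by rewrite eq_ij eqxx in neq_ij.
Qed.

Section UniformRecurrence.
Variables (R : realDomainType) (T : Type) (d : T -> T -> R).
Variables (S : T -> Prop) (U : T -> T).
Hypothesis d_quasi_triangle : forall x y z, d x z <= 2 * d x y + 2 * d y z.
Hypothesis U_S : forall s, S s -> S (U s).
Hypothesis d_U : forall s t, S s -> S t -> d (U s) (U t) = d s t.

Lemma iter_S n s : S s -> S (iter n U s).
Proof. by elim: n => //= n IHn Ss; apply/U_S/IHn. Qed.

Lemma d_iter n s t : S s -> S t -> d (iter n U s) (iter n U t) = d s t.
Proof. by elim: n => //= n IHn Ss St; rewrite d_U ?IHn //; apply: iter_S. Qed.

Variables (C : finType) (code : T -> C) (e : R).
Hypothesis code_close :
  forall v w, S v -> S w -> code v = code w -> d v w <= e.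

Lemma uniform_recurrence (x0 : T) :
  exists2 n, (0 < n)%N & forall s, S s -> d (iter n U s) s <= 10 * e.
Proof.
pose rep (c : C) : T := epsilon (inhabits x0) (fun s => S s /\ code s = c).
have rep_code s : S s -> S (rep (code s)) /\ code (rep (code s)) = code s.
  by move=> Ss; apply: (epsilon_spec (inhabits x0) (fun x => S x /\ _)); exists s.
pose orbit_code n : {ffun C -> C} := [ffun c => code (iter n U (rep c))].
have [p [q [lt_pq eq_pq]]] := pigeonhole_nat orbit_code.
exists (q - p)%N => [|s Ss]; first by rewrite subn_gt0.
have := congr1 (fun f : {ffun C -> C} => f (code s)) eq_pq; rewrite /= !ffunE.
have [] := rep_code s Ss; move: (rep (code s)) => r Sr code_r code_pq.
have -> : d (iter (q - p) U s) s = d (iter q U s) (iter p U s).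
  by rewrite -[in RHS](subnKC (ltnW lt_pq)) iterD d_iter //; apply: iter_S.
have d_qs_qr : d (iter q U s) (iter q U r) <= e.
  by rewrite d_iter // code_close.
have d_qr_pr : d (iter q U r) (iter p U r) <= e.
  by apply: code_close => //; apply: iter_S.
have d_pr_ps : d (iter p U r) (iter p U s) <= e.
  by rewrite d_iter // code_close.
have := d_quasi_triangle (iter q U s) (iter q U r) (iter p U s).
have := d_quasi_triangle (iter q U r) (iter p U r) (iter p U s).
lra.
Qed.

End UniformRecurrence.

Lemma interval_finite_code (R : archiRealFieldType) (D h : R) : 0 < h ->
  exists N (code : R -> 'I_N),
    forall x y, `|x| < D -> `|y| < D -> code x = code y -> `|x - y| < h.
Proof.
move=> h_gt0; pose cell x := Num.truncn ((x + D) / h).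
have cellP x : `|x| < D ->
    (cell x < (cell D).+1)%N /\ (cell x)%:R <= (x + D) / h < (cell x).+1%:R.
  rewrite ltr_norml => /andP[ltNDx ltxD]; split.
    by rewrite ltnS le_truncn // ler_pM2r ?invr_gt0 //; lra.
  by rewrite truncn_itv // divr_ge0 //; lra.
exists (cell D).+1, (fun x => inord (cell x)).
move=> x y /cellP[ltx cellx] /cellP[lty celly].
move/(congr1 val); rewrite /= !inordK // => eq_cell.
rewrite eq_cell in cellx; move: cellx celly; rewrite -addn1 natrD.
set X := (x + D) / h; set Y := (y + D) / h; move: ((cell y)%:R) => n.
move=> /andP[leX ltX] /andP[leY ltY].
have lt_XY : `|X - Y| < 1 by rewrite ltr_norml; lra.
have -> : x - y = (X - Y) * h by rewrite mulrBl !divfK ?gt_eqF //; ring.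
by rewrite normrM (gtr0_norm h_gt0) -ltr_pdivlMr // divff ?gt_eqF.
Qed.

Section HermitianSpace.
Variables (R : realType) (k : nat).
Implicit Types (v w x y z c : 'rV[R[i]]_k).

Definition sqnorm v : R := complex.Re (inner v v).

Lemma sqnormE v :
  sqnorm v = \sum_(j < k) (complex.Re (v 0 j) ^+ 2 + complex.Im (v 0 j) ^+ 2).
Proof.
rewrite /sqnorm /inner; elim/big_rec2: _ => // j r z _ <-.
by case: (v 0 j) z => a b [p q] /=; ring.
Qed.

Lemma dist_ltE x y (e : R) : 0 < e -> (dist x y < e) = (sqnorm (x - y) < e ^+ 2).
Proof.
by move=> e_gt0; rewrite /dist -[RHS]ltr_sqrt ?exprn_gt0 // sqrtr_sqr gtr0_norm.
Qed.

Lemma innerBB x y :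
  inner (x - y) (x - y) = inner x x - inner x y - inner y x + inner y y.
Proof.
rewrite /inner -!sumrB -big_split; apply: eq_bigr => j _.
by rewrite !mxE rmorphB /=; ring.
Qed.

Lemma sqnormB_quasi_triangle x y z :
  sqnorm (x - z) <= 2 * sqnorm (x - y) + 2 * sqnorm (y - z).
Proof.
rewrite !sqnormE !mulr_sumr -big_split; apply: ler_sum => j _ /=; rewrite !mxE.
case: (x 0 j) (y 0 j) (z 0 j) => [a b] [c d] [e f] /=.
have := sqr_ge0 (a - 2 * c + e); have := sqr_ge0 (b - 2 * d + f); nra.
Qed.

Lemma coord_sqr_le_sqnorm v j :
  complex.Re (v 0 j) ^+ 2 + complex.Im (v 0 j) ^+ 2 <= sqnorm v.
Proof.
rewrite sqnormE (bigD1 j) //= lerDl.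
by apply: sumr_ge0 => i _; rewrite addr_ge0 ?sqr_ge0.
Qed.

Lemma ball_finite_code c (D e : R) : 0 < e ->
  exists (C : finType) (code : 'rV[R[i]]_k -> C), forall v w,
    sqnorm (v - c) < D ^+ 2 -> sqnorm (w - c) < D ^+ 2 -> code v = code w ->
    sqnorm (v - w) <= e.
Proof.
move=> e_gt0; have k1_gt0 : 0 < k%:R + 1 :> R by rewrite ltr_wpDl ?ler0n.
pose h := Num.sqrt (e / (2 * (k%:R + 1))).
have h_gt0 : 0 < h by rewrite sqrtr_gt0 divr_gt0 ?mulr_gt0.
have h2E : h ^+ 2 = e / (2 * (k%:R + 1)).
  by rewrite sqr_sqrtr // ltW ?divr_gt0 ?mulr_gt0.
have [N [code1 code1P]] := interval_finite_code `|D| h_gt0.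
have norm_lt a : a ^+ 2 < D ^+ 2 -> `|a| < `|D|.
  move=> lt_aD; rewrite -ltr_sqr ?nnegrE ?normr_ge0 //.
  by rewrite -!normrX !ger0_norm ?sqr_ge0.
have coord_lt v j : sqnorm v < D ^+ 2 ->
    `|complex.Re (v 0 j)| < `|D| /\ `|complex.Im (v 0 j)| < `|D|.
  move=> lt_vD; have := coord_sqr_le_sqnorm v j.
  have := sqr_ge0 (complex.Re (v 0 j)); have := sqr_ge0 (complex.Im (v 0 j)).
  by split; apply: norm_lt; lra.
exists {ffun 'I_k -> 'I_N * 'I_N}.
exists (fun v => [ffun j => (code1 (complex.Re ((v - c) 0 j)),
                             code1 (complex.Im ((v - c) 0 j)))]).
move=> v w lt_vD lt_wD eq_code.
have -> : v - w = (v - c) - (w - c) by rewrite opprB addrA subrK.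
apply: (@le_trans _ _ (\sum_(j < k) (2 * h ^+ 2))).
  rewrite sqnormE; apply: ler_sum => j _.
  have := congr1 (fun f : {ffun 'I_k -> 'I_N * 'I_N} => f j) eq_code.
  rewrite !ffunE => -[/code1P eq_re /code1P eq_im].
  have [re_v im_v] := coord_lt _ j lt_vD; have [re_w im_w] := coord_lt _ j lt_wD.
  move: (eq_re re_v re_w) (eq_im im_v im_w); rewrite !mxE.
  case: ((v - c) 0 j) ((w - c) 0 j) => [a b] [p q] /=; rewrite !ltr_norml.
  by move=> /andP[? ?] /andP[? ?]; nra.
rewrite sumr_const card_ord -[_ *+ k]mulr_natl h2E.
have -> : k%:R * (2 * (e / (2 * (k%:R + 1)))) = e - e / (k%:R + 1).
  by field; rewrite lt0r_neq0.
by rewrite gerBl divr_ge0 ?ltW.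
Qed.

Lemma bounded_finite_code (S : 'rV[R[i]]_k -> Prop) (D e : R) :
  (forall s t, S s -> S t -> dist s t < D) -> 0 < e ->
  exists (C : finType) (code : 'rV[R[i]]_k -> C),
    forall v w, S v -> S w -> code v = code w -> sqnorm (v - w) <= e.
Proof.
move=> S_bounded e_gt0.
have [[s0 S_s0] | S_empty] := classic (exists s0, S s0); last first.
  by exists unit, (fun _ => tt) => v w Sv; case: S_empty; exists v.
have D_gt0 : 0 < D by apply: le_lt_trans (sqrtr_ge0 _) (S_bounded _ _ S_s0 S_s0).
have [C [code code_close]] := ball_finite_code s0 D e_gt0.
by exists C, code => v w Sv Sw; apply: code_close; rewrite -dist_ltE ?S_bounded.
Qed.

End HermitianSpace.

Theorem theorem6 (R : realType) (k : nat)
  (S : 'rV[R[i]]_k -> Prop) (U : 'rV[R[i]]_k -> 'rV[R[i]]_k)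
  (HUS : forall s, S s -> S (U s))
  (Hbounded : exists D : R, forall s t, S s -> S t -> dist s t < D)
  (Hinner : forall s t, S s -> S t -> inner (U s) (U t) = inner s t) :
  forall eps : R, 0 < eps ->
    exists n : nat, (0 < n)%N /\
      forall s, S s -> dist (iter n U s) s < eps.
Proof.
move=> eps eps_gt0; have [D S_bounded] := Hbounded.
have e_gt0 : 0 < eps ^+ 2 / 20 by rewrite divr_gt0 ?exprn_gt0.
have [C [code code_close]] := bounded_finite_code S_bounded e_gt0.
have U_sqnorm s t : S s -> S t -> sqnorm (U s - U t) = sqnorm (s - t).
  by move=> Ss St; rewrite /sqnorm !innerBB !Hinner.
have [n n_gt0 U_recurrent] := uniform_recurrence (@sqnormB_quasi_triangle R k)
  HUS U_sqnorm code_close 0.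
exists n; split => // s Ss; rewrite dist_ltE //.
apply: le_lt_trans (U_recurrent s Ss) _.
by have := exprn_gt0 2 eps_gt0; lra.
Qed.
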